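(* Let $G=(A\cup B,E)$ be a bipartite graph, let $\sigma_A=(a_1,\ldots,a_n)$ be an ordering of $A$ and $\sigma_B=(b_1,\ldots,b_m)$ an ordering of $B$. Let $H$ be the directed graph with vertex set $A\cup B$ and the following arcs: $a_{i-1}\to a_i$ for $2\le i\le n$; $b_{p-1}\to b_p$ for $2\le p\le m$; $a_i\to b_p$ whenever $a_ib_p\in E$; and $b_p\to a_j$ whenever there exist indices $i<j$ and $p<q$ with $a_ib_p\in E$, $a_jb_q\in E$ and $a_jb_p\notin E$. Then $G$ admits a Stick representation respecting $\sigma_A$ and $\sigma_B$ if and only if $H$ is acyclic.
   Context: A Stick representation of a bipartite graph $G=(A\cup B,E)$ (with $A$ horizontal and $B$ vertical) assigns to each vertex of $A$ a horizontal segment and to each vertex of $B$ a vertical segment such that the left endpoints of all horizontal segments and the bottom endpoints of all vertical segments lie on a fixed ground line $\ell$ of slope $-1$ (with the segments lying on the side of $\ell$ into which they extend rightward/upward), and a horizontal and a vertical segment intersect if and only if the corresponding vertices are adjacent in $G$. The representation respects $\sigma_A$ and $\sigma_B$ if, ordering the points where segments touch $\ell$ from left to right, the $i$th horizontal segment corresponds to the $i$th vertex of $\sigma_A$ and the $j$th vertical segment corresponds to the $j$th vertex of $\sigma_B$. *)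

From mathcomp Require Import all_boot all_order all_algebra.
From mathcomp Require Import reals.
Set Implicit Arguments. Unset Strict Implicit. Unset Printing Implicit Defensive.
Import Order.TTheory GRing.Theory Num.Theory.
Local Open Scope ring_scope.

(* Bipartite graph G = (A u B, E) with A = 'I_n, B = 'I_m; the ordering
   sigma_A is a_1,...,a_n = 0,...,n-1 and sigma_B is b_1,...,b_m = 0,...,m-1.
   The edge set is given by E : 'I_n -> 'I_m -> bool. *)

Definition on_hseg (R : realType) (x y l : R) (p : R * R) : Prop :=
  p.2 = y /\ x <= p.1 /\ p.1 <= x + l.

Definition on_vseg (R : realType) (x y h : R) (p : R * R) : Prop :=
  p.1 = x /\ y <= p.2 /\ p.2 <= y + h.

(* The ground line
   is l = {(x,y) | x + y = c} (slope -1).  Vertex a_i gets the horizontal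
   segment from (xA i, yA i) to (xA i + lA i, yA i) and b_p the vertical
   segment from (xB p, yB p) to (xB p, yB p + hB p); the left/bottom endpoints
   lie on l; ordering the touching points of l from left to right (by their
   x-coordinate) gives sigma_A on the horizontal and sigma_B on the vertical
   segments. *)
Definition stick_rep_respecting (R : realType) (n m : nat)
    (E : 'I_n -> 'I_m -> bool) : Prop :=
  exists (c : R) (xA yA lA : 'I_n -> R) (xB yB hB : 'I_m -> R),
    [/\ (forall i, xA i + yA i = c /\ 0 < lA i),
        (forall p, xB p + yB p = c /\ 0 < hB p),
        (forall i j : 'I_n, (i < j)%N -> xA i < xA j),
        (forall p q : 'I_m, (p < q)%N -> xB p < xB q) &
        (forall i p, E i p <->
           exists pt : R * R, on_hseg (xA i) (yA i) (lA i) pt /\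
                              on_vseg (xB p) (yB p) (hB p) pt)].

Definition H_arc (n m : nat) (E : 'I_n -> 'I_m -> bool) :
    rel ('I_n + 'I_m) :=
  fun u v =>
    match u, v with
    | inl i, inl j => (i.+1 == j)%N
    | inr p, inr q => (p.+1 == q)%N
    | inl i, inr p => E i p
    | inr p, inl j =>
        [exists i : 'I_n, exists q : 'I_m,
           [&& (i < j)%N, (p < q)%N, E i p, E j q & ~~ E j p]]
    end.

Definition acyclic (V : finType) (arc : rel V) : Prop :=
  forall (v : V) (s : seq V), s != [::] -> path arc v s -> last v s != v.

(* (=>) Order the vertices by the x-coordinate of their foot on the ground
   line, horizontal before vertical at ties.  Every arc of H increases this
   key: the chain arcs because the representation respects the orderings, an
   arc a_i -> b_p because a horizontal segment starts left of any vertical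
   segment it meets, and an arc b_p -> a_j because if the foot of a_j were not
   right of that of b_p, then a_j, which reaches the further b_q, and b_p, which
   reaches the higher a_i, would cross.
   (<=) Place the feet along a topological numbering of H and let every
   segment extend exactly to its farthest neighbour.  If a_i and b_p are not
   adjacent but their segments still cross, the farthest neighbours b_q of a_i
   and a_j of b_p satisfy p < q and j < i, so b_p -> a_i is an arc of H going
   backwards in the numbering. *)

From mathcomp Require Import all_boot all_order all_algebra.
From mathcomp Require Import reals.
From mathcomp Require Import lra zify.
Set Implicit Arguments. Unset Strict Implicit. Unset Printing Implicit Defensive.
Import Order.TTheory GRing.Theory Num.Theory.

Lemma acyclic_homo_lt (V : finType) d (T : porderType d) (e : rel V) (f : V -> T) :
  {homo f : u v / e u v >-> (u < v)%O} -> acyclic e.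
Proof.
move=> f_lt v [//|w s] _ /(homo_path f_lt) /(order_path_min lt_trans) /allP f_gt /=.
apply: contraTneq (f_gt _ (map_f f (mem_last w s))) => ->.
by rewrite ltxx.
Qed.

Lemma acyclic_rank (V : finType) (e : rel V) :
  acyclic e -> exists f : V -> nat, {homo f : u v / e u v >-> (u < v)%N}.
Proof.
move=> e_acyclic; exists (fun v => #|[pred w | connect e w v]|) => u v euv.
apply/proper_card/properP; split.
  by apply/subsetP => w /= /connect_trans; apply; apply: connect1.
exists v; rewrite !inE ?connect0 //.
apply/negP => /connectP[s vs u_last].
by have := e_acyclic u (v :: s) isT; rewrite /= euv vs -u_last eqxx => /(_ isT).
Qed.

Lemma ord_homo_ltn T (r : T -> T -> Prop) n (f : 'I_n -> T) :
  (forall y x z, r x y -> r y z -> r x z) ->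
  (forall i j : 'I_n, i.+1 = j :> nat -> r (f i) (f j)) ->
  {homo f : i j / (i < j)%N >-> r i j}.
Proof.
case: n f => [f _ _ [] //|n f r_trans f_succ i j ij].
have g_homo : {in [pred k | k < n.+1] &,
    {homo (fun k => f (inord k)) : k l / k < l >-> r k l}}.
  apply: homo_ltn_in => // [a b _ b_lt k /andP[_ k_lt]|k k_lt k1_lt].
    by rewrite !inE in b_lt *; apply: ltn_trans k_lt b_lt.
  by apply: f_succ; rewrite /= !inordK.
by have := g_homo i j (ltn_ord i) (ltn_ord j) ij; rewrite !inord_val.
Qed.

Lemma bigmax_geq_witness (I : finType) (P : pred I) (F : I -> nat) m :
  (0 < m)%N -> (m <= \max_(i | P i) F i)%N -> exists2 i, P i & (m <= F i)%N.
Proof.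
case: (pickP P) => [i0 Pi0 _|P0].
  rewrite (bigop.bigmax_eq_arg i0 Pi0); case: arg_maxnP => // i Pi _ le_m.
  by exists i.
by rewrite big_pred0 // => m_gt0; rewrite leqNgt m_gt0.
Qed.

Local Open Scope ring_scope.

Lemma hseg_vseg_meet (R : realType) (x y l x' y' h : R) :
  x + y = x' + y' ->
  (exists pt, on_hseg x y l pt /\ on_vseg x' y' h pt) <->
  [/\ x <= x', x' <= x + l & x' <= x + h].
Proof.
move=> same_line; split.
  by case=> -[px py] [[/= ? [? ?]] [/= ? [? ?]]]; split; lra.
by case=> *; exists (x', y); rewrite /on_hseg /on_vseg /=; do !split; lra.
Qed.

Section SticksAcyclic.
Variables (R : realType) (n m : nat) (E : 'I_n -> 'I_m -> bool).
Variables (c : R) (xA yA lA : 'I_n -> R) (xB yB hB : 'I_m -> R).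
Hypotheses (footA : forall i, xA i + yA i = c) (footB : forall p, xB p + yB p = c).
Hypothesis xA_lt : forall i j : 'I_n, (i < j)%N -> xA i < xA j.
Hypothesis xB_lt : forall p q : 'I_m, (p < q)%N -> xB p < xB q.
Hypothesis E_meet : forall i p, E i p <->
  exists pt, on_hseg (xA i) (yA i) (lA i) pt /\ on_vseg (xB p) (yB p) (hB p) pt.

Lemma edge_sticksE i p :
  E i p <-> [/\ xA i <= xB p, xB p <= xA i + lA i & xB p <= xA i + hB p].
Proof. by rewrite E_meet hseg_vseg_meet // footA footB. Qed.

Lemma cross_arc_lt p j : H_arc E (inr p) (inl j) -> xB p < xA j.
Proof.
case/existsP=> i /existsP[q /and5P[ij pq /edge_sticksE Eip /edge_sticksE Ejq]].
rewrite ltNge; apply: contraNN => le_jp; apply/edge_sticksE.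
case: Eip Ejq => _ _ reach_p [_ reach_j _].
have := xA_lt ij; have := xB_lt pq; split; lra.
Qed.

(* A horizontal segment may meet a vertical one exactly at their common foot,
   hence ties are broken by putting horizontal segments first. *)
Definition stick_key (u : 'I_n + 'I_m) : R *l bool :=
  match u with inl i => (xA i, false) | inr p => (xB p, true) end.

Lemma stick_key_homo : {homo stick_key : u v / H_arc E u v >-> (u < v)%O}.
Proof.
have lt_fst (x y : R) (b b' : bool) :
    x < y -> (((x, b) : R *l bool) < (y, b'))%O.
  by move=> xy; rewrite ltxi_pair ltW //= leNgt xy.
case=> [i|p] [j|q] /=.
- by move/eqP=> ij; apply/lt_fst/xA_lt; rewrite -ij.
- by case/edge_sticksE=> le_ip _ _; rewrite ltxi_pair le_ip implybT.
- by move/cross_arc_lt/lt_fst.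
- by move/eqP=> pq; apply/lt_fst/xB_lt; rewrite -pq.
Qed.

Lemma sticks_acyclic : acyclic (H_arc E).
Proof. exact: acyclic_homo_lt stick_key_homo. Qed.

End SticksAcyclic.

Section SticksOfPotential.
Variables (R : realType) (n m : nat) (E : 'I_n -> 'I_m -> bool).
Variable pos : 'I_n + 'I_m -> nat.
Hypothesis pos_homo : {homo pos : u v / H_arc E u v >-> (u < v)%N}.
Hypothesis pos_sides_neq : forall i p, pos (inl i) != pos (inr p).

Let posA i := pos (inl i).
Let posB p := pos (inr p).

Lemma posA_homo : {homo posA : i j / (i < j)%N}.
Proof. by apply: ord_homo_ltn ltn_trans _ => i j ij; apply: pos_homo; apply/eqP. Qed.

Lemma posB_homo : {homo posB : p q / (p < q)%N}.
Proof. by apply: ord_homo_ltn ltn_trans _ => p q pq; apply: pos_homo; apply/eqP. Qed.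

Definition reachA i := (\max_(q | E i q) (posB q - posA i))%N.
Definition reachB p := (\max_(j | E j p) (posB p - posA j))%N.

Lemma edge_reachE i p : E i p =
  [&& posA i < posB p, posB p - posA i <= reachA i & posB p - posA i <= reachB p]%N.
Proof.
apply/idP/and3P => [Eip|[ab reach_i reach_p]].
  by split; [exact: (pos_homo (x := inl i) (y := inr p)) | exact: leq_bigmax_cond..].
apply/idPn => nEip.
have [q Eiq le_pq] : exists2 q, E i q & (posB p - posA i <= posB q - posA i)%N.
  by apply: bigmax_geq_witness; rewrite ?subn_gt0.
have [j Ejp le_ji] : exists2 j, E j p & (posB p - posA i <= posB p - posA j)%N.
  by apply: bigmax_geq_witness; rewrite ?subn_gt0.
have pq : (p < q)%N.
  case: ltngtP => // [/posB_homo|/val_inj p_q]; first lia.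
  by move: nEip; rewrite p_q Eiq.
have ji : (j < i)%N.
  case: ltngtP => // [/posA_homo|/val_inj j_i]; first lia.
  by move: nEip; rewrite -j_i Ejp.
have cross : H_arc E (inr p) (inl i).
  by apply/existsP; exists j; apply/existsP; exists q; rewrite ji pq Ejp Eiq nEip.
have := pos_homo cross; rewrite -/(posA i) -/(posB p); lia.
Qed.

Lemma sticks_of_potential : stick_rep_respecting R E.
Proof.
(* Doubling the positions lets the extra unit that keeps lengths positive
   stop short of the next foot. *)
exists 0, (fun i => (posA i).*2%:R), (fun i => - (posA i).*2%:R),
  (fun i => (reachA i).*2.+1%:R), (fun p => (posB p).*2%:R),
  (fun p => - (posB p).*2%:R), (fun p => (reachB p).*2.+1%:R).
split=> [i|p|i j /posA_homo|p q /posB_homo|i p];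
  rewrite ?addrN ?ltr0n ?ltr_nat ?ltn_double //.
rewrite edge_reachE hseg_vseg_meet ?addrN // -!natrD !ler_nat.
have := pos_sides_neq i p; rewrite -/(posA i) -/(posB p) => neq.
by split=> [/and3P[? ? ?]|[? ? ?]]; [split | apply/and3P; split]; lia.
Qed.

End SticksOfPotential.

Lemma stick_rep_acyclic (R : realType) n m (E : 'I_n -> 'I_m -> bool) :
  stick_rep_respecting R E -> acyclic (H_arc E).
Proof.
case=> c [xA [yA [lA [xB [yB [hB [onA onB xA_lt xB_lt E_meet]]]]]]].
exact: (sticks_acyclic (fun i => (onA i).1) (fun p => (onB p).1) xA_lt xB_lt E_meet).
Qed.

Lemma acyclic_stick_rep (R : realType) n m (E : 'I_n -> 'I_m -> bool) :
  acyclic (H_arc E) -> stick_rep_respecting R E.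
Proof.
case/acyclic_rank=> rank rank_homo.
(* Odd positions on the B side keep all feet distinct. *)
pose pos u := if u is inl _ then (rank u).*2 else (rank u).*2.+1.
apply: (@sticks_of_potential R n m E pos) => [[i|p] [j|q] /rank_homo /=|i p /=].
all: lia.
Qed.

Theorem lemma1 (R : realType) (n m : nat) (E : 'I_n -> 'I_m -> bool) :
  stick_rep_respecting R E <-> acyclic (H_arc E).
Proof. by split; [apply: stick_rep_acyclic | apply: acyclic_stick_rep]. Qed.
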